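(* A random joint choice rule $p$ on a finite set $X$ is consistent with state independent consumption dependent random utility if and only if it satisfies complete monotonicity, marginality, and choice set independence.
   Context: $X$ is finite, $\mathcal{X}$ the nonempty subsets of $X$, $\mathcal{L}(X)$ the linear orders on $X$, $N(x,A)=\{\succ: x\succ y\ \forall y\in A\setminus\{x\}\}$. A random joint choice rule assigns to each $A,B\in\mathcal{X}$ and $(x,y)\in A\times B$ a number $p(x,y,A,B)\ge0$ with $\sum_{x\in A}\sum_{y\in B}p(x,y,A,B)=1$. Its Möbius inverse $q$ is defined by $p(x,y,A,B)=\sum_{A\subseteq A'\subseteq X}\sum_{B\subseteq B'\subseteq X}q(x,y,A',B')$. A state independent transition function is a map $x\mapsto t(x)\in\Delta(\mathcal{L}(X))$ (a transition function not depending on the preference input), with $t_{\succ'}(x)$ the probability of $\succ'$. $p$ is consistent with state independent consumption dependent random utility if there exist $\nu\in\Delta(\mathcal{L}(X))$ and a state independent transition function $t$ with $p(x,y,A,B)=\sum_{\succ\in N(x,A)}\sum_{\succ'\in N(y,B)}\nu(\succ)t_{\succ'}(x)$ for all $A,B\in\mathcal{X}$, $(x,y)\in A\times B$. Complete monotonicity: $q(x,y,A,B)\ge0$ for all arguments. Marginality: for all $A,B,C\in\mathcal{X}$ and $x\in A$, $\sum_{y\in B}p(x,y,A,B)=\sum_{y\in C}p(x,y,A,C)$. Write $p(x,A)=\sum_{y\in X}p(x,y,A,X)$ (under marginality this equals $\sum_{y\in B}p(x,y,A,B)$ for any $B$). Choice set independence: for every $B\in\mathcal{X}$, $y\in B$,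 and all $A,A'\in\mathcal{X}$ containing $x$ with $p(x,A)>0$ and $p(x,A')>0$, $\frac{p(x,y,A,B)}{p(x,A)}=\frac{p(x,y,A',B)}{p(x,A')}$. *)

From HB Require Import structures.
From mathcomp Require Import all_boot all_order all_algebra.
Set Implicit Arguments. Unset Strict Implicit. Unset Printing Implicit Defensive.
Import Order.TTheory GRing.Theory Num.Theory.
Local Open Scope ring_scope.

Section Defs.
Variable X : finType.

(* A (strict) linear order on X, as a boolean relation: r (x,y) means x ≻ y. *)
Definition is_linorder (r : {ffun X * X -> bool}) : bool :=
  [&& [forall x, ~~ r (x, x)],
      [forall x, forall y, forall z, r (x, y) && r (y, z) ==> r (x, z)] &
      [forall x, forall y, (x != y) ==> r (x, y) || r (y, x)]].

Definition linorder := {r : {ffun X * X -> bool} | is_linorder r}.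

Definition succ (o : linorder) (x y : X) : bool := (val o) (x, y).

Definition inN (x : X) (A : {set X}) (o : linorder) : bool :=
  [forall y in A :\ x, succ o x y].

Variable R : realFieldType.

Definition is_distr (nu : {ffun linorder -> R}) : Prop :=
  (forall o, 0 <= nu o) /\ \sum_o nu o = 1.

(* p x y A B = p(x,y,A,B); only values with A,B nonempty, x∈A, y∈B matter. *)
Definition is_rjcr (p : X -> X -> {set X} -> {set X} -> R) : Prop :=
  (forall A B x y, A != set0 -> B != set0 -> x \in A -> y \in B ->
     0 <= p x y A B) /\
  (forall A B, A != set0 -> B != set0 ->
     \sum_(x in A) \sum_(y in B) p x y A B = 1).

(* Möbius inverse of p (the unique q with
   p(x,y,A,B) = Σ_{A⊆A'} Σ_{B⊆B'} q(x,y,A',B')), given by Möbius inversion. *)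
Definition mobius (p : X -> X -> {set X} -> {set X} -> R)
  (x y : X) (A B : {set X}) : R :=
  \sum_(A' : {set X} | A \subset A') \sum_(B' : {set X} | B \subset B')
    (-1) ^+ (#|A' :\: A| + #|B' :\: B|) * p x y A' B'.

Definition consistent_SICDRU (p : X -> X -> {set X} -> {set X} -> R) : Prop :=
  exists (nu : {ffun linorder -> R}) (t : X -> {ffun linorder -> R}),
    is_distr nu /\ (forall x, is_distr (t x)) /\
    forall A B x y, A != set0 -> B != set0 -> x \in A -> y \in B ->
      p x y A B = \sum_(o | inN x A o) \sum_(o' | inN y B o') nu o * t x o'.

Definition complete_monotonicity (p : X -> X -> {set X} -> {set X} -> R) : Prop :=
  forall A B x y, A != set0 -> B != set0 -> x \in A -> y \in B ->
    0 <= mobius p x y A B.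

Definition marginality (p : X -> X -> {set X} -> {set X} -> R) : Prop :=
  forall A B C x, A != set0 -> B != set0 -> C != set0 -> x \in A ->
    \sum_(y in B) p x y A B = \sum_(y in C) p x y A C.

Definition pmarg (p : X -> X -> {set X} -> {set X} -> R) (x : X) (A : {set X}) : R :=
  \sum_y p x y A setT.

Definition choice_set_independence (p : X -> X -> {set X} -> {set X} -> R) : Prop :=
  forall B y A A' x, B != set0 -> y \in B -> A != set0 -> A' != set0 ->
    x \in A -> x \in A' -> 0 < pmarg p x A -> 0 < pmarg p x A' ->
    p x y A B / pmarg p x A = p x y A' B / pmarg p x A'.

End Defs.

(* Consistency means p(x,y,A,B) = ρ(x,A) τ_x(y,B) with ρ and every τ_x random
   utility rules. In this product form the Möbius inverse of p is the product of the
   Block-Marschak polynomials of ρ and of τ_x, which are nonnegative, and marginality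
   and choice set independence can be read off directly. Conversely, marginality
   makes ρ(x,A) = p(x,A) a random choice rule, choice set independence factors p
   through τ_x(y,B) = p(x,y,A₀,B) / p(x,A₀) for any A₀ with p(x,A₀) > 0, and
   complete monotonicity makes the Block-Marschak polynomials of ρ and of τ_x
   nonnegative. Falmagne's theorem then represents ρ and each τ_x: nonnegative
   Block-Marschak polynomials q(x,A) form a unit flow on the lattice of subsets
   (the inflow Σ_{z∉A} q(z,A∪{z}) equals the outflow Σ_{x∈A} q(x,A)), so the Markov
   chain removing x from the current set A with probability proportional to q(x,A)
   generates a random linear order in which x is best in A with probability
   Σ_{A'⊇A} q(x,A') = ρ(x,A). *)

From mathcomp Require Import all_boot all_order all_algebra.
Set Implicit Arguments. Unset Strict Implicit. Unset Printing Implicit Defensive.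
Import Order.TTheory GRing.Theory Num.Theory.
Local Open Scope ring_scope.

Section AlternatingSums.
Variables (R : numDomainType) (X : finType).
Implicit Types (A C : {set X}).

Lemma sum_sign_reversing_eq0 (I : finType) (P : pred I) (F : I -> R) (s : I -> I) :
  involutive s -> (forall i, P (s i) = P i) -> (forall i, P i -> F (s i) = - F i) ->
  \sum_(i | P i) F i = 0.
Proof.
move=> sK Ps Fs; suff /eqP : (\sum_(i | P i) F i) *+ 2 = 0.
  by rewrite mulrn_eq0 => /eqP.
rewrite mulr2n {1}(reindex_inj (inv_inj sK)) /=; apply/eqP; rewrite addr_eq0 -sumrN.
by apply/eqP/eq_big => i; rewrite Ps // => /Fs.
Qed.

Definition toggle (t : X) A := if t \in A then A :\ t else t |: A.

Lemma in_toggle t A u : (u \in toggle t A) = (u == t) (+) (u \in A).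
Proof.
by rewrite /toggle; case: (boolP (t \in A)) => tA; rewrite !inE;
  case: (eqVneq u t) => [->|]; rewrite ?tA.
Qed.

Lemma toggleK t : involutive (toggle t).
Proof. by move=> A; apply/setP => u; rewrite !in_toggle addbA addbb. Qed.

Lemma sign_toggle t A : (-1) ^+ #|toggle t A| = - (-1) ^+ #|A| :> R.
Proof.
rewrite /toggle; case: (boolP (t \in A)) => tA.
  by rewrite -{2}(setD1K tA) cardsU1 !inE eqxx exprS mulN1r opprK.
by rewrite cardsU1 tA exprS mulN1r.
Qed.

Lemma toggle_interval t A C A' : t \notin A -> t \in C ->
  (A \subset toggle t A') && (toggle t A' \subset C) = (A \subset A') && (A' \subset C).
Proof.
move=> tA tC; congr andb; apply/subsetP/subsetP => sub u.
- move=> uA; have := sub u uA; rewrite in_toggle.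
  by case: (eqVneq u t) uA => [->|]; rewrite ?(negPf tA).
- move=> uA; rewrite in_toggle; case: (eqVneq u t) uA => [->|_ uA]; first by rewrite (negPf tA).
  exact: sub.
- move=> uA'; case: (eqVneq u t) => [->//|ut].
  by apply: sub; rewrite in_toggle (negPf ut) uA'.
- by rewrite in_toggle; case: (eqVneq u t) => [->//|_]; apply: sub.
Qed.

Lemma sum_sign_interval A C : A \subset C ->
  \sum_(A' : {set X} | (A \subset A') && (A' \subset C)) (-1) ^+ #|A' :\: A| =
  (A == C)%:R :> R.
Proof.
move=> AC; have [<-|AnC] := eqVneq A C.
  rewrite (big_pred1 A) ?setDv ?cards0 // => A' /=.
  by rewrite eq_sym eqEsubset andbC.
have /set0Pn [t] : C :\: A != set0.
  by rewrite setD_eq0; apply: contra AnC => CA; rewrite eqEsubset AC.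
rewrite inE => /andP [tA tC].
apply: (sum_sign_reversing_eq0 (toggleK t)) => [A'|A' _]; first exact: toggle_interval.
have -> : toggle t A' :\: A = toggle t (A' :\: A).
  by apply/setP => u; rewrite !(inE, in_toggle); case: eqP => [->|]; rewrite ?(negPf tA).
exact: sign_toggle.
Qed.

Lemma sign_setD_chain A A' C : A \subset A' -> A' \subset C ->
  (-1) ^+ #|C :\: A'| = (-1) ^+ #|C :\: A| * (-1) ^+ #|A' :\: A| :> R.
Proof.
move=> AA' A'C; have AC := subset_trans AA' A'C.
have -> : #|C :\: A| = (#|C :\: A'| + #|A' :\: A|)%N.
  by rewrite !cardsDS // addnBA ?subnK // subset_leq_card.
by rewrite exprD -mulrA -expr2 sqrr_sign mulr1.
Qed.

(* For [f := ρ x] with [ρ] a random choice rule, [mobius1 f A] is the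
   Block-Marschak polynomial [q(x, A)]. *)
Definition mobius1 (f : {set X} -> R) A :=
  \sum_(A' : {set X} | A \subset A') (-1) ^+ #|A' :\: A| * f A'.

Lemma sum_mobius1 f A : \sum_(A' : {set X} | A \subset A') mobius1 f A' = f A.
Proof.
rewrite /mobius1 (exchange_big_dep (fun C => A \subset C)) /=; last first.
  by move=> ? ?; apply: subset_trans.
under eq_bigr => C AC.
  rewrite -big_distrl /= (eq_bigr (fun A' => (-1) ^+ #|C :\: A| * (-1) ^+ #|A' :\: A|)).
    by rewrite -big_distrr /= sum_sign_interval // over.
  by move=> A' /andP[AA' A'C]; rewrite (sign_setD_chain AA' A'C).
rewrite (bigD1 A) //= eqxx setDv cards0 !mul1r big1 ?addr0 // => C /andP[_ CnA].
by rewrite eq_sym (negPf CnA) !mulr0 mul0r.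
Qed.

Lemma mobius1_sum g A : mobius1 (fun A' => \sum_(C : {set X} | A' \subset C) g C) A = g A.
Proof.
rewrite /mobius1; under eq_bigr => A' _ do rewrite big_distrr.
rewrite (exchange_big_dep (fun C => A \subset C)) /=; last first.
  by move=> ? ?; apply: subset_trans.
under eq_bigr => C AC do rewrite -big_distrl /= sum_sign_interval //.
rewrite (bigD1 A) //= eqxx mul1r big1 ?addr0 // => C /andP[_ CnA].
by rewrite eq_sym (negPf CnA) mul0r.
Qed.

End AlternatingSums.

Section LinearOrdersOnSubsets.
Variable X : finType.
Implicit Types (A B D : {set X}) (r : {ffun X * X -> bool}).

Definition linear_on D r : bool :=
  [&& [forall p : X * X, r p ==> (p.1 \in D) && (p.2 \in D)],
      [forall x, ~~ r (x, x)],
      [forall x, forall y, forall z, r (x, y) && r (y, z) ==> r (x, z)] &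
      [forall x in D, forall y in D, (x != y) ==> r (x, y) || r (y, x)]].

Lemma linear_onP D r : reflect
  [/\ forall x y, r (x, y) -> (x \in D) && (y \in D),
      forall x, r (x, x) = false,
      forall x y z, r (x, y) -> r (y, z) -> r (x, z) &
      {in D &, forall x y, x != y -> r (x, y) || r (y, x)}]
  (linear_on D r).
Proof.
apply: (iffP and4P) => -[dom irr tr tot]; split.
- by move=> x y rxy; move/forallP/(_ (x, y))/implyP: dom; apply.
- by move=> x; apply/negbTE; move/forallP: irr.
- by move=> x y z rxy ryz; move: tr => /forallP/(_ x)/forallP/(_ y)/forallP/(_ z)/implyP;
    apply; rewrite rxy.
- move=> x y xD yD; move/forallP/(_ x)/implyP/(_ xD): tot.
  by move/forallP/(_ y)/implyP/(_ yD)/implyP.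
- by apply/forallP => -[x y]; apply/implyP/dom.
- by apply/forallP => x; rewrite irr.
- by do 3 apply/forallP => ?; apply/implyP => /andP[]; apply: tr.
- do 2 (apply/forallP => ?; apply/implyP => ?).
  by apply/implyP; apply: tot.
Qed.

Section OneOrder.
Variables (D : {set X}) (r : {ffun X * X -> bool}).
Hypothesis r_lin : linear_on D r.

Lemma linear_on_dom x y : r (x, y) -> (x \in D) && (y \in D).
Proof. by case/linear_onP: r_lin => dom _ _ _; apply: dom. Qed.

Lemma linear_on_doml x y : r (x, y) -> x \in D.
Proof. by case/linear_on_dom/andP. Qed.

Lemma linear_on_domr x y : r (x, y) -> y \in D.
Proof. by case/linear_on_dom/andP. Qed.

Lemma linear_on_irr x : r (x, x) = false.
Proof. by case/linear_onP: r_lin. Qed.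

Lemma linear_on_trans x y z : r (x, y) -> r (y, z) -> r (x, z).
Proof. by case/linear_onP: r_lin => _ _ tr _; apply: tr. Qed.

Lemma linear_on_total x y : x \in D -> y \in D -> x != y -> r (x, y) || r (y, x).
Proof. by case/linear_onP: r_lin => _ _ _ tot; apply: tot. Qed.

Lemma linear_on_asym x y : r (x, y) -> r (y, x) = false.
Proof.
by move=> rxy; apply/negP => /(linear_on_trans rxy); rewrite linear_on_irr.
Qed.

End OneOrder.

Lemma exists_greatest (B : {set X}) (rl : X -> X -> bool) :
  (forall x, rl x x = false) -> (forall x y z, rl x y -> rl y z -> rl x z) ->
  {in B &, forall x y, x != y -> rl x y || rl y x} -> B != set0 ->
  exists2 t, t \in B & {in B, forall y, y != t -> rl t y}.
Proof.
move=> irr tr tot /set0Pn [x0 x0B].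
pose above i := [set y in B | rl i y].
have [t tB tmax] := @arg_maxnP _ x0 (mem B) (fun i => #|above i|) x0B.
exists t => // y yB ynt; have /orP [//|ryt] : rl t y || rl y t by rewrite tot // eq_sym.
have: (#|above t| < #|above y|)%N.
  apply/proper_card/properP; split.
    by apply/subsetP => z; rewrite !inE => /andP[-> /(tr _ _ _ ryt)].
  by exists t; rewrite !inE ?irr ?andbF ?ryt ?andbT.
by rewrite ltnNge; move: (tmax y yB) => /= ->.
Qed.

Definition is_top D r t := (t \in D) && [forall y in D :\ t, r (t, y)].

Lemma is_topP D r t :
  reflect (t \in D /\ {in D, forall y, y != t -> r (t, y)}) (is_top D r t).
Proof.
apply: (iffP andP) => -[tD top]; split => //.
  by move=> y yD ynt; move/forallP/(_ y)/implyP: top; apply; rewrite !inE ynt.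
by apply/forallP => y; apply/implyP; rewrite !inE => /andP[ynt yD]; apply: top.
Qed.

Lemma exists_top D D' r : linear_on D' r -> D \subset D' -> D != set0 ->
  exists t, is_top D r t.
Proof.
move=> r_lin DD' D0; have tot : {in D &, forall x y, x != y -> r (x, y) || r (y, x)}.
  by move=> x y xD yD; apply: (linear_on_total r_lin); apply: (subsetP DD').
have [t tD tmax] := exists_greatest (linear_on_irr r_lin) (linear_on_trans r_lin) tot D0.
by exists t; apply/is_topP.
Qed.

Lemma is_top_inj D D' r t t' : linear_on D' r -> is_top D r t -> is_top D r t' -> t = t'.
Proof.
move=> r_lin /is_topP [tD top] /is_topP [t'D top']; apply/eqP/negP => /negP tnt'.
have := top' t tD tnt'; rewrite (linear_on_asym r_lin) // top //.
by rewrite eq_sym.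
Qed.

Definition del_top t r := [ffun p : X * X => [&& r p, p.1 != t & p.2 != t]].

Definition ext_top D t r :=
  [ffun p : X * X => r p || [&& p.1 == t, p.2 \in D & p.2 != t]].

Lemma linear_on_ext_top D t r :
  t \in D -> linear_on (D :\ t) r -> linear_on D (ext_top D t r).
Proof.
move=> tD r_lin; apply/linear_onP; split.
- move=> x y; rewrite ffunE /= => /orP [/(linear_on_dom r_lin)|/and3P[/eqP -> -> _]].
    by rewrite !inE => /andP [/andP[_ ->] /andP[_ ->]].
  by rewrite tD.
- move=> x; rewrite ffunE /= (linear_on_irr r_lin).
  by case: eqVneq => //= ->; rewrite andbF.
- move=> x y z; rewrite !ffunE /=.
  case/orP => [rxy|/and3P[/eqP xt yD yt]] /orP [ryz|/and3P[/eqP yt' zD zt]].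
  + by rewrite (linear_on_trans r_lin rxy ryz).
  + by have := linear_on_domr r_lin rxy; rewrite yt' !inE eqxx.
  + have := linear_on_dom r_lin ryz; rewrite !inE => /andP[_ /andP [zt zD]].
    by rewrite xt eqxx zD zt orbT.
  + by rewrite yt' eqxx in yt.
- move=> x y xD yD xy; rewrite !ffunE /=.
  have [xt|xt] := eqVneq x t; first by rewrite yD -xt eq_sym xy !orbT.
  have [yt|yt] := eqVneq y t; first by rewrite xD !orbT.
  have := linear_on_total r_lin (x := x) (y := y); rewrite !inE xt yt xD yD /=.
  by case/(_ isT isT xy)/orP => ->; rewrite ?orbT.
Qed.

Lemma is_top_ext_top D t r : t \in D -> is_top D (ext_top D t r) t.
Proof. by move=> tD; apply/is_topP; split=> // y yD yt; rewrite ffunE /= eqxx yD yt orbT. Qed.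

Lemma ext_topK D t r : linear_on (D :\ t) r -> del_top t (ext_top D t r) = r.
Proof.
move=> r_lin; apply/ffunP => -[x y]; rewrite !ffunE /=.
case rxy: (r (x, y)) => /=.
  by have := linear_on_dom r_lin rxy; rewrite !inE => /andP [/andP[-> _] /andP[-> _]].
by case: eqVneq; rewrite /= ?andbF.
Qed.

Lemma del_topK D t r : linear_on D r -> is_top D r t -> ext_top D t (del_top t r) = r.
Proof.
move=> r_lin /is_topP [tD top]; apply/ffunP => -[x y]; rewrite !ffunE /=.
case rxy: (r (x, y)) => /=.
  have [xt|xt] := eqVneq x t.
    rewrite (linear_on_domr r_lin rxy) /=; apply: contraTneq rxy => yt.
    by rewrite xt yt (linear_on_irr r_lin).
  have [yt|//] := eqVneq y t.
  have rtx := top x (linear_on_doml r_lin rxy) xt.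
  by move: rxy; rewrite yt (linear_on_asym r_lin rtx).
by apply/negP => /and3P [/eqP xt yD yt]; move: rxy; rewrite xt top.
Qed.

Lemma linear_on_del_top D t r :
  linear_on D r -> is_top D r t -> linear_on (D :\ t) (del_top t r).
Proof.
move=> r_lin t_top; apply/linear_onP; split.
- move=> x y; rewrite ffunE /= => /and3P [rxy xt yt].
  by rewrite !inE xt yt (linear_on_doml r_lin rxy) (linear_on_domr r_lin rxy).
- by move=> x; rewrite ffunE /= (linear_on_irr r_lin).
- move=> x y z; rewrite !ffunE /= => /and3P [rxy xt _] /and3P [ryz _ zt].
  by rewrite (linear_on_trans r_lin rxy ryz) xt zt.
- move=> x y; rewrite !inE => /andP[xt xD] /andP[yt yD] xy; rewrite !ffunE /= xt yt.
  by rewrite !andbT; apply: (linear_on_total r_lin xD yD xy).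
Qed.

Lemma sum_linear_on_top (V : nmodType) D (F : {ffun X * X -> bool} -> V) : D != set0 ->
  \sum_(r | linear_on D r) F r =
  \sum_(t in D) \sum_(r | linear_on (D :\ t) r) F (ext_top D t r).
Proof.
move=> D0; transitivity (\sum_(r | linear_on D r) \sum_(t | is_top D r t) F r).
  apply: eq_bigr => r r_lin; have [t0 t0_top] := exists_top r_lin (subxx D) D0.
  rewrite (big_pred1 t0) // => t; apply/idP/eqP => [t_top|->//].
  exact: (is_top_inj r_lin t_top t0_top).
rewrite (exchange_big_dep (mem D)) /=; last by move=> r t _ /andP[].
apply: eq_bigr => t tD.
rewrite (reindex_onto (ext_top D t) (del_top t)) /=; last first.
  by move=> r /andP[r_lin t_top]; apply: del_topK.
apply: eq_bigl => r; apply/idP/idP.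
  by case/andP => /andP [r_lin t_top] /eqP <-; apply: linear_on_del_top.
by move=> r_lin; rewrite linear_on_ext_top // is_top_ext_top // ext_topK // eqxx.
Qed.

Definition lower D r x := [set y in D | ~~ r (y, x)].

Lemma lower_sub D r x : lower D r x \subset D.
Proof. by apply/subsetP => y; rewrite inE => /andP[]. Qed.

Lemma lower_self D r x : linear_on D r -> x \in D -> x \in lower D r x.
Proof. by move=> r_lin xD; rewrite inE xD (linear_on_irr r_lin). Qed.

Lemma lower_ext_top_top D t r : linear_on (D :\ t) r -> lower D (ext_top D t r) t = D.
Proof.
move=> r_lin; apply/setP => y; rewrite !inE ffunE /= eqxx !andbF orbF.
case: (boolP (y \in D)) => //= _; apply: contraTN isT => /(linear_on_domr r_lin).
by rewrite !inE eqxx.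
Qed.

Lemma lower_ext_top D t r x : linear_on (D :\ t) r -> x \in D -> x != t ->
  lower D (ext_top D t r) x = lower (D :\ t) r x.
Proof.
move=> r_lin xD xt; apply/setP => y; rewrite !inE ffunE /= (negPf xt) xD /= !andbT.
by rewrite negb_or; case: (eqVneq y t) => /= _; rewrite ?andbF ?andbT // andbC.
Qed.

Lemma lower_inj D r : linear_on D r -> {in D &, injective (lower D r)}.
Proof.
move=> r_lin x x' xD x'D e; apply/eqP/negP => /negP xx'.
have : x \in lower D r x' by rewrite -e lower_self.
have : x' \in lower D r x by rewrite e lower_self.
rewrite !inE => /andP[_ /negPf rx'x] /andP[_ /negPf rxx'].
by have := linear_on_total r_lin xD x'D xx'; rewrite rxx' rx'x.
Qed.

End LinearOrdersOnSubsets.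

Section RemovalChain.
Variables (R : realFieldType) (X : finType) (w : X -> {set X} -> R).
Hypothesis w_ge0 : forall x (A : {set X}), x \in A -> 0 <= w x A.
Implicit Types (A D : {set X}) (r : {ffun X * X -> bool}).

Definition outflow A := \sum_(x in A) w x A.

(* The chain that, at state [A], removes [x] with probability [step_prob A x]
   (uniform when no flow leaves [A]). Its successive removals list [D] in the
   decreasing order of some [r]: [order_prob D r] is the probability of that order
   and [hit D A x] the probability that [x] is removed at state [A]. *)
Definition step_prob A x :=
  if outflow A == 0 then #|A|%:R^-1 else w x A / outflow A.

Definition order_prob D r := \prod_(x in D) step_prob (lower D r x) x.

Definition hit D A x := \sum_(r | linear_on D r && (lower D r x == A)) order_prob D r.

Lemma outflow_ge0 A : 0 <= outflow A.
Proof. by apply: sumr_ge0 => x; apply: w_ge0. Qed.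

Lemma step_prob_ge0 A x : x \in A -> 0 <= step_prob A x.
Proof.
move=> xA; rewrite /step_prob; case: ifP => _; first by rewrite invr_ge0 ler0n.
by rewrite divr_ge0 ?outflow_ge0 ?w_ge0.
Qed.

Lemma sum_step_prob A : A != set0 -> \sum_(x in A) step_prob A x = 1.
Proof.
move=> A0; rewrite /step_prob; have [_|out0] := eqVneq (outflow A) 0.
  by rewrite sumr_const -[_ *+ _]mulr_natr mulVf // pnatr_eq0 -lt0n card_gt0.
by rewrite -big_distrl /= divff.
Qed.

Lemma outflow_step_prob A x : x \in A -> outflow A * step_prob A x = w x A.
Proof.
move=> xA; rewrite /step_prob; case: ifPn => [/eqP out0|out0]; last by rewrite mulrC divfK.
by rewrite out0 mul0r (psumr_eq0P (fun y => @w_ge0 y A) out0).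
Qed.

Lemma order_prob_ge0 D r : linear_on D r -> 0 <= order_prob D r.
Proof. by move=> r_lin; apply: prodr_ge0 => x xD; rewrite step_prob_ge0 ?lower_self. Qed.

Lemma order_prob_ext_top D t r : t \in D -> linear_on (D :\ t) r ->
  order_prob D (ext_top D t r) = step_prob D t * order_prob (D :\ t) r.
Proof.
move=> tD r_lin; rewrite /order_prob (big_setD1 t tD) /= lower_ext_top_top //.
congr (_ * _); apply: eq_bigr => x; rewrite !inE => /andP[xt xD].
by rewrite lower_ext_top.
Qed.

Lemma linear_on_set0 r : linear_on set0 r = (r == [ffun _ => false]).
Proof.
apply/idP/eqP => [r_lin|->].
  apply/ffunP => -[x y]; rewrite ffunE.
  by apply/negbTE/negP => /(linear_on_doml r_lin); rewrite inE.
by apply/linear_onP; split=> [x y|x|x y z|x y]; rewrite ?ffunE ?inE.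
Qed.

Lemma sum_order_prob D : \sum_(r | linear_on D r) order_prob D r = 1.
Proof.
have [n] := ubnP #|D|; elim: n D => // n IH D /ltnSE leDn.
have [->|D0] := eqVneq D set0.
  rewrite (big_pred1 [ffun _ => false]) => [|r]; last by rewrite /= linear_on_set0.
  by rewrite /order_prob big_set0.
rewrite sum_linear_on_top // -[RHS](sum_step_prob D0); apply: eq_bigr => t tD.
under eq_bigr => r r_lin do rewrite order_prob_ext_top //.
by rewrite -mulr_sumr IH ?mulr1 //; rewrite (cardsD1 t D) tD in leDn.
Qed.

Lemma hit_notsub D A x : ~~ (A \subset D) -> hit D A x = 0.
Proof.
by move=> AnD; apply: big1 => r /andP[_ /eqP lowA]; rewrite -lowA lower_sub in AnD.
Qed.

Lemma hit_first_step D A x : x \in A -> A \subset D ->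
  hit D A x = \sum_(t in D) step_prob D t *
                (if t == x then (D == A)%:R else hit (D :\ t) A x).
Proof.
move=> xA AD; have xD : x \in D by apply: (subsetP AD).
have D0 : D != set0 by apply/set0Pn; exists x.
rewrite /hit big_mkcondr /= sum_linear_on_top //; apply: eq_bigr => t tD.
have [<-|tx] := eqVneq t x.
  under eq_bigr => r r_lin do rewrite lower_ext_top_top // order_prob_ext_top //.
  have [_|_] := eqVneq D A; last by rewrite big1 ?mulr0.
  by rewrite -big_distrr /= sum_order_prob.
rewrite [in RHS]big_mkcondr /= big_distrr /=; apply: eq_bigr => r r_lin.
rewrite lower_ext_top 1?eq_sym // order_prob_ext_top //.
by case: ifP; rewrite ?mulr0.
Qed.

Lemma hit_self D y : y \in D -> hit D D y = step_prob D y.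
Proof.
move=> yD; rewrite hit_first_step // (bigD1 y) //= !eqxx mulr1 big1 ?addr0 //.
move=> t /andP[tD ty]; rewrite (negPf ty) hit_notsub ?mulr0 //.
by apply/subsetPn; exists t; rewrite ?inE ?eqxx.
Qed.

Lemma hit_markov D A x : x \in A -> hit D A x = (\sum_(y in A) hit D A y) * step_prob A x.
Proof.
have [n] := ubnP #|D|; elim: n D x => // n IH D x /ltnSE leDn xA.
have [AD|AnD] := boolP (A \subset D); last first.
  by rewrite !hit_notsub // big1 ?mul0r // => y _; rewrite hit_notsub.
have [<-|AneD] := eqVneq A D.
  rewrite hit_self // (eq_bigr _ (fun y yA => hit_self yA)) sum_step_prob ?mul1r //.
  by apply/set0Pn; exists x.
have first_step y : y \in A -> hit D A y = \sum_(t in D) step_prob D t * hit (D :\ t) A y.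
  move=> yA; rewrite hit_first_step //; apply: eq_bigr => t tD.
  have [->|//] := eqVneq t y; rewrite eq_sym (negPf AneD) hit_notsub //.
  by apply/subsetPn; exists y; rewrite ?inE ?eqxx.
rewrite first_step // (eq_bigr _ first_step) exchange_big big_distrl /=.
apply: eq_bigr => t tD; rewrite -mulr_sumr -mulrA -IH //.
by rewrite (cardsD1 t D) tD in leDn.
Qed.

End RemovalChain.

Lemma sum_indicator_unique (R : pzSemiRingType) (I : finType) (P Q : pred I) :
  (forall i j, P i -> Q i -> P j -> Q j -> i = j) ->
  \sum_(i | P i) (Q i)%:R = [exists i, P i && Q i]%:R :> R.
Proof.
move=> uniq; case: existsP => [[i /andP[Pi Qi]]|none].
  rewrite (bigD1 i) //= Qi big1 ?addr0 // => j /andP[Pj ji].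
  by case Qj: (Q j) => //; rewrite (uniq _ _ Pi Qi Pj Qj) eqxx in ji.
by apply: big1 => i Pi; case Qi: (Q i) => //; case: none; exists i; rewrite Pi Qi.
Qed.

Section DownClosedSets.
Variables (X : finType) (r : {ffun X * X -> bool}).
Hypothesis r_lin : linear_on setT r.
Implicit Types (A : {set X}).

Definition down_closed A := [forall u in A, forall v, r (u, v) ==> (v \in A)].

Lemma down_closedP A : reflect {in A, forall u v, r (u, v) -> v \in A} (down_closed A).
Proof.
apply: (iffP forallP) => [closed u uA v ruv|closed u].
  by move/implyP/(_ uA)/forallP/(_ v)/implyP: (closed u); apply.
by apply/implyP => uA; apply/forallP => v; apply/implyP; apply: closed.
Qed.

Let r_total x y : x != y -> r (x, y) || r (y, x).
Proof. exact: (linear_on_total r_lin (in_setT x) (in_setT y)). Qed.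

Lemma exists_lower_eq A : A != set0 ->
  [exists y in A, lower setT r y == A] = down_closed A.
Proof.
move=> A0; apply/existsP/down_closedP => [[y /andP[yA /eqP lowA]] u uA v ruv|closed].
  rewrite -lowA !inE in uA *; apply: contra uA => rvy.
  exact: (linear_on_trans r_lin ruv rvy).
have [y yA ymax] := exists_greatest (linear_on_irr r_lin) (linear_on_trans r_lin)
  (fun x y _ _ => r_total (x := x) (y := y)) A0.
exists y; rewrite yA; apply/eqP/setP => v; rewrite !inE /=.
have [->|vy] := eqVneq v y; first by rewrite (linear_on_irr r_lin) yA.
have [vA|vnA] := boolP (v \in A); first by rewrite (linear_on_asym r_lin (ymax v vA vy)).
have /orP [ryv|-> //] : r (y, v) || r (v, y) by rewrite r_total // eq_sym.
by have := closed y yA v ryv; rewrite (negPf vnA).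
Qed.

Lemma exists_lower_eq_setU1 A : A != setT ->
  [exists z in ~: A, lower setT r z == z |: A] = down_closed A.
Proof.
move=> AnT; apply/existsP/down_closedP => [[z /andP[zA /eqP lowzA]] u uA v ruv|closed].
  have : u \in lower setT r z by rewrite lowzA setU1r.
  rewrite !inE /= => ruz.
  apply: contraNT ruz => vnA; have [<-//|vz] := eqVneq v z.
  have : v \notin lower setT r z by rewrite lowzA !inE negb_or vz.
  by rewrite !inE negbK; apply: (linear_on_trans r_lin ruv).
have nA0 : ~: A != set0 by apply: contraNneq AnT => nA0; rewrite -[A]setCK nA0 setC0.
have r_total' : {in ~: A &, forall x y, x != y -> r (y, x) || r (x, y)}.
  by move=> x y _ _ xy; rewrite orbC r_total.
have [z zA zmin] := exists_greatest (rl := fun a b => r (b, a)) (linear_on_irr r_lin)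
  (fun x y z rxy ryz => linear_on_trans r_lin ryz rxy) r_total' nA0.
exists z; rewrite zA; apply/eqP/setP => v; rewrite !inE /=.
have [->|vz] := eqVneq v z; first by rewrite (linear_on_irr r_lin).
have [vA|vnA] := boolP (v \in A); last by rewrite zmin // inE.
rewrite orbT; apply/negP => rvz.
by move: zA; rewrite inE (closed v vA z rvz).
Qed.

(* Both sides are [(down_closed A)%:R]. *)
Lemma sum_lower_eq (R : pzSemiRingType) A : A != set0 -> A != setT ->
  \sum_(y in A) (lower setT r y == A)%:R =
  \sum_(z in ~: A) (lower setT r z == z |: A)%:R :> R.
Proof.
move=> A0 AnT; rewrite !sum_indicator_unique.
- by rewrite exists_lower_eq // exists_lower_eq_setU1.
- move=> z z'; rewrite !inE => znA /eqP lowz z'nA /eqP lowz'; apply/eqP/negP => /negP zz'.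
  have below a b : r (a, b) -> b \in lower setT r a.
    by move=> rab; rewrite !inE (linear_on_asym r_lin rab).
  case/orP: (r_total zz') => /below; rewrite ?lowz ?lowz' !inE.
    by rewrite (negPf z'nA) orbF eq_sym (negPf zz').
  by rewrite (negPf znA) orbF (negPf zz').
- by move=> y y' _ /eqP lowy _ /eqP lowy'; apply: (lower_inj r_lin); rewrite ?in_setT ?lowy.
Qed.

End DownClosedSets.

Section FlowConservation.
Variables (R : realFieldType) (X : finType) (w : X -> {set X} -> R).
Hypothesis w_ge0 : forall x (A : {set X}), x \in A -> 0 <= w x A.
Hypothesis inflow_eq_outflow : forall A : {set X}, A != set0 -> A != setT ->
  \sum_(z in ~: A) w z (z |: A) = outflow w A.
Hypothesis outflow_setT : [set: X] != set0 -> outflow w setT = 1.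
Implicit Types (A P : {set X}).

Lemma sum_hit P (S : X -> {set X}) :
  \sum_(y in P) hit w setT (S y) y =
  \sum_(r | linear_on setT r)
     (\sum_(y in P) (lower setT r y == S y)%:R) * order_prob w setT r.
Proof.
rewrite /hit; under eq_bigr => y _ do rewrite big_mkcondr.
rewrite exchange_big /=; apply: eq_bigr => r r_lin; rewrite mulr_suml.
by apply: eq_bigr => y _; case: eqP; rewrite ?mul1r ?mul0r.
Qed.

(* Induction on [#|~: A|]: [A] is reached exactly when some [z |: A] is left through [z]. *)
Lemma sum_hit_outflow A : A != set0 -> \sum_(y in A) hit w setT A y = outflow w A.
Proof.
have [n] := ubnP #|~: A|; elim: n A => // n IH A /ltnSE lenA A0.
have [AT|AnT] := eqVneq A setT.
  rewrite AT in A0 *; rewrite (eq_bigr (step_prob w setT)) => [|y _].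
    by rewrite sum_step_prob // outflow_setT.
  exact: hit_self (in_setT y).
rewrite (sum_hit A (fun=> A)).
under eq_bigr => r r_lin do rewrite sum_lower_eq //.
rewrite -(sum_hit (~: A) (fun z => z |: A)) -inflow_eq_outflow //.
apply: eq_bigr => z zA; have zzA := setU11 z A.
rewrite hit_markov // IH ?outflow_step_prob //; last by apply/set0Pn; exists z.
have -> : ~: (z |: A) = ~: A :\ z by apply/setP => u; rewrite !inE negb_or andbC.
by rewrite (cardsD1 z (~: A)) zA in lenA.
Qed.

Lemma hit_setT A x : x \in A -> hit w setT A x = w x A.
Proof.
move=> xA; rewrite hit_markov // sum_hit_outflow ?outflow_step_prob //.
by apply/set0Pn; exists x.
Qed.

End FlowConservation.

Section RandomUtility.
Variables (R : realFieldType) (X : finType).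
Implicit Types (A B C : {set X}) (r : {ffun X * X -> bool}) (f g : {ffun linorder X -> R}).

Lemma is_linorderE r : is_linorder r = linear_on setT r.
Proof.
apply/and3P/linear_onP => [[/forallP irr /forallP tr /forallP tot]|[_ irr tr tot]]; split.
- by move=> x y; rewrite !in_setT.
- by move=> x; apply/negbTE.
- move=> x y z rxy ryz; move/forallP/(_ y)/forallP/(_ z)/implyP: (tr x); apply.
  by rewrite rxy.
- by move=> x y _ _ xy; move/forallP/(_ y)/implyP: (tot x); apply.
- by apply/forallP => x; rewrite irr.
- by do 3 apply/forallP => ?; apply/implyP => /andP[]; apply: tr.
- by do 2 apply/forallP => ?; apply/implyP; apply: tot; rewrite in_setT.
Qed.

Lemma linear_on_val (o : linorder X) : linear_on setT (val o).
Proof. by rewrite -is_linorderE; apply: valP. Qed.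

Lemma sum_linorder (P : pred {ffun X * X -> bool}) (F : {ffun X * X -> bool} -> R) :
  \sum_(o : linorder X | P (val o)) F (val o) = \sum_(r | linear_on setT r && P r) F r.
Proof.
rewrite (reindex_omap (val : linorder X -> _) insub) => [|r /andP[r_lin _]]; last first.
  by rewrite insubT // is_linorderE.
apply: eq_bigl => -[r r_lin] /=; rewrite -is_linorderE r_lin /= insubT /=.
by case: (P r) => //=; apply/esym/eqP.
Qed.

Lemma is_top_inN (o : linorder X) x A : is_top A (val o) x = (x \in A) && inN x A o.
Proof. by []. Qed.

Lemma inN_lower (o : linorder X) x A : x \in A -> inN x A o = (A \subset lower setT (val o) x).
Proof.
move=> xA; have o_lin := linear_on_val o.
apply/forallP/subsetP => [top y yA|low y].
  rewrite !inE /=; have [->|yx] := eqVneq y x; first by rewrite (linear_on_irr o_lin).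
  move/implyP: (top y); rewrite !inE yx yA => /(_ isT) rxy.
  exact/negbT/(linear_on_asym o_lin rxy).
apply/implyP; rewrite !inE => /andP[yx /low]; rewrite !inE /= => ryx.
have := linear_on_total o_lin (in_setT x) (in_setT y).
by rewrite eq_sym yx (negPf ryx) orbF; apply.
Qed.

Definition choice_prob f x A := \sum_(o | inN x A o) f o.

Lemma sum_mul_choice_prob f g x y A B :
  \sum_(o | inN x A o) \sum_(o' | inN y B o') f o * g o' =
  choice_prob f x A * choice_prob g y B.
Proof. by rewrite mulr_suml; apply: eq_bigr => o _; rewrite mulr_sumr. Qed.

Lemma choice_prob_sum f B : is_distr f -> B != set0 -> \sum_(y in B) choice_prob f y B = 1.
Proof.
move=> [_ f1] B0; rewrite -f1 /choice_prob.
under eq_bigr => y _ do rewrite big_mkcond /=.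
rewrite exchange_big /=; apply: eq_bigr => o _; have o_lin := linear_on_val o.
rewrite (eq_bigr (fun y => (inN y B o)%:R * f o)) => [|y _]; last first.
  by case: ifP; rewrite ?mul1r ?mul0r.
rewrite -mulr_suml sum_indicator_unique => [|y y' yB yN y'B y'N].
  have [t] := exists_top o_lin (subsetT B) B0; rewrite is_top_inN => tN.
  by rewrite (_ : [exists _, _] = true) ?mul1r //; apply/existsP; exists t.
by apply: (is_top_inj (D := B) o_lin); apply/andP.
Qed.

Lemma mobius1_choice_prob_ge0 f x A : (forall o, 0 <= f o) -> x \in A ->
  0 <= mobius1 (choice_prob f x) A.
Proof.
move=> f_ge0 xA; pose lower_prob C := \sum_(o | lower setT (val o) x == C) f o.
have -> : mobius1 (choice_prob f x) A =
          mobius1 (fun A' => \sum_(C : {set X} | A' \subset C) lower_prob C) A.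
  apply: eq_bigr => A' AA'; congr (_ * _); rewrite /choice_prob.
  rewrite (eq_bigl _ _ (fun o => inN_lower o (subsetP AA' x xA))).
  rewrite (partition_big (fun o => lower setT (val o) x) (fun C => A' \subset C)) //.
  apply: eq_bigr => C A'C; apply: eq_bigl => o.
  by case: eqP => [->|]; rewrite ?A'C ?andbF.
by rewrite mobius1_sum; apply: sumr_ge0.
Qed.

Section Falmagne.
Variable rho : X -> {set X} -> R.
Hypothesis rho_sum : forall A, A != set0 -> \sum_(x in A) rho x A = 1.
Hypothesis mobius1_rho_ge0 : forall x A, x \in A -> 0 <= mobius1 (rho x) A.

Let q x A := mobius1 (rho x) A.

(* Expand [Σ_{x∈A} ρ(x,C) = 1 - Σ_{x∈C∖A} ρ(x,C)]: the constant terms cancel by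
   [sum_sign_interval] as [A ≠ X], and the rest regroups by the removed [z]. *)
Lemma inflow_eq_outflow_mobius1 A : A != set0 -> A != setT ->
  \sum_(z in ~: A) q z (z |: A) = outflow q A.
Proof.
move=> A0 AnT; rewrite /outflow /q /mobius1 exchange_big /=.
have rho_in C : A \subset C -> \sum_(x in A) rho x C = 1 - \sum_(x in C :\: A) rho x C.
  move=> AC; have C0 : C != set0 by apply: contraNneq A0 => C0; rewrite -subset0 -C0.
  by rewrite -(rho_sum C0) [in RHS](big_setID A) /= (setIidPr AC) addrK.
under [RHS]eq_bigr => C AC do rewrite -mulr_sumr rho_in // mulrBr mulr1 mulr_sumr.
rewrite sumrB (eq_bigl (fun C => (A \subset C) && (C \subset setT))) => [|C]; last first.
  by rewrite subsetT andbT.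
rewrite sum_sign_interval ?subsetT // (negPf AnT) sub0r.
apply/eqP; rewrite eq_sym eqr_oppLR -sumrN; apply/eqP.
rewrite (exchange_big_dep (fun z => z \in ~: A)) => [|C z _]; last by rewrite !inE => /andP[].
apply: eq_bigr => z zA; rewrite -sumrN; rewrite inE in zA.
apply: eq_big => [C|C /andP[AC zC]].
  by rewrite subUset sub1set !inE (negPf zA) andbC.
have -> : #|C :\: A| = (#|C :\: (z |: A)|).+1.
  by rewrite (cardsD1 z) zC setDDl setUC.
by rewrite exprS mulN1r mulNr.
Qed.

Lemma outflow_mobius1_setT : [set: X] != set0 -> outflow q setT = 1.
Proof.
move=> T0; rewrite -(rho_sum T0); apply: eq_bigr => x _.
rewrite /q /mobius1 (big_pred1 setT) => [|C]; last by rewrite /= subTset eq_sym.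
by rewrite setDv cards0 mul1r.
Qed.

Theorem falmagne :
  exists2 nu, is_distr nu & forall x A, x \in A -> choice_prob nu x A = rho x A.
Proof.
pose nu := [ffun o : linorder X => order_prob q setT (val o)].
have nuE o : nu o = order_prob q setT (val o) by rewrite ffunE.
exists nu; first split.
- by move=> o; rewrite nuE order_prob_ge0 ?linear_on_val.
- rewrite (eq_bigr _ (fun o _ => nuE o)).
  rewrite (sum_linorder xpredT (order_prob q setT)) -(sum_order_prob q setT).
  by apply: eq_bigl => r; rewrite andbT.
move=> x A xA; rewrite /choice_prob (eq_bigr _ (fun o _ => nuE o)).
rewrite (eq_bigl _ _ (fun o => inN_lower o xA)).
rewrite (sum_linorder (fun r => A \subset lower setT r x) (order_prob q setT)).
rewrite (partition_big (fun r => lower setT r x) (fun C => A \subset C)) => [|r /andP[]//].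
rewrite -(sum_mobius1 (rho x) A); apply: eq_bigr => C AC.
have hitE := hit_setT mobius1_rho_ge0 inflow_eq_outflow_mobius1 outflow_mobius1_setT.
rewrite -hitE ?(subsetP AC) //.
apply: eq_bigl => r; rewrite -andbA; congr (_ && _).
by case: eqP => [->|]; rewrite ?AC ?andbF.
Qed.

End Falmagne.
End RandomUtility.

Lemma exists_mobius1_gt0 (R : realDomainType) (X : finType) (f : {set X} -> R) A :
  0 < f A -> exists2 C : {set X}, A \subset C & 0 < mobius1 f C.
Proof.
move=> fA_gt0; case: (pickP [pred C : {set X} | (A \subset C) && (0 < mobius1 f C)]).
  by move=> C /andP[AC qC]; exists C.
move=> none; suff : f A <= 0 by rewrite leNgt fA_gt0.
rewrite -sum_mobius1 sumr_le0 // => C AC.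
by have := none C; rewrite /= AC /= => /negbT; rewrite -leNgt.
Qed.

Section JointChoice.
Variables (X : finType) (R : realFieldType) (p : X -> X -> {set X} -> {set X} -> R).
Implicit Types (A B C : {set X}).

Lemma mobius_mul (f g : {set X} -> R) x y A B :
  (forall A' B', A \subset A' -> B \subset B' -> p x y A' B' = f A' * g B') ->
  mobius p x y A B = mobius1 f A * mobius1 g B.
Proof.
move=> p_mul; rewrite /mobius mulr_suml; apply: eq_bigr => A' AA'.
rewrite mulr_sumr; apply: eq_bigr => B' BB'.
by rewrite p_mul // exprD mulrACA.
Qed.

Section ProductForm.
Variables (rho : X -> {set X} -> R) (tau : X -> X -> {set X} -> R).
Hypothesis p_mul : forall A B x y, x \in A -> y \in B -> p x y A B = rho x A * tau x y B.
Hypothesis tau_sum : forall x B, B != set0 -> \sum_(y in B) tau x y B = 1.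

Lemma sum_product_form x A B : x \in A -> B != set0 -> \sum_(y in B) p x y A B = rho x A.
Proof.
by move=> xA B0; rewrite (eq_bigr _ (fun y => p_mul xA)) -mulr_sumr tau_sum ?mulr1.
Qed.

Lemma product_form_marginality : marginality p.
Proof. by move=> A B C x _ B0 C0 xA; rewrite !sum_product_form. Qed.

Lemma product_form_choice_set_independence : choice_set_independence p.
Proof.
have pmargE x A : x \in A -> pmarg p x A = rho x A.
  move=> xA; rewrite /pmarg -(sum_product_form xA (B := setT)); last first.
    by apply/set0Pn; exists x.
  by apply: eq_bigl => y; rewrite in_setT.
move=> B y A A' x _ yB _ _ xA xA'; rewrite !pmargE // => rho_gt0 rho'_gt0.
by rewrite !p_mul // [LHS]mulrAC [RHS]mulrAC !divff ?mul1r ?lt0r_neq0.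
Qed.

Lemma product_form_complete_monotonicity :
  (forall x A, x \in A -> 0 <= mobius1 (rho x) A) ->
  (forall x y B, y \in B -> 0 <= mobius1 (tau x y) B) -> complete_monotonicity p.
Proof.
move=> rho_ge0 tau_ge0 A B x y _ _ xA yB.
rewrite (mobius_mul (f := rho x) (g := tau x y)) ?mulr_ge0 ?rho_ge0 ?tau_ge0 //.
by move=> A' B' AA' BB'; rewrite p_mul ?(subsetP AA') ?(subsetP BB').
Qed.

End ProductForm.

Section Recovery.
Hypothesis p_rjcr : is_rjcr p.
Hypothesis p_cm : complete_monotonicity p.
Hypothesis p_mg : marginality p.
Hypothesis p_csi : choice_set_independence p.

Let nonempty x A : x \in A -> A != set0.
Proof. by move=> xA; apply/set0Pn; exists x. Qed.

Lemma pmarg_ge0 x A : x \in A -> 0 <= pmarg p x A.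
Proof.
move=> xA; apply: sumr_ge0 => y _.
by case: p_rjcr => p_ge0 _; rewrite p_ge0 ?in_setT // (nonempty xA, nonempty (in_setT y)).
Qed.

Lemma pmarg_sum A : A != set0 -> \sum_(x in A) pmarg p x A = 1.
Proof.
move=> A0; have /set0Pn [x _] := A0.
case: p_rjcr => _ /(_ A setT A0 (nonempty (in_setT x))) <-.
by apply: eq_bigr => x' _; apply: eq_bigl => y; rewrite in_setT.
Qed.

Lemma mobius1_pmarg_ge0 x A : x \in A -> 0 <= mobius1 (pmarg p x) A.
Proof.
move=> xA; have -> : mobius1 (pmarg p x) A = \sum_y mobius p x y A setT.
  rewrite /mobius1 /pmarg exchange_big /=; apply: eq_bigr => A' _.
  rewrite mulr_sumr; apply: eq_bigr => y _.
  by rewrite [RHS](big_pred1 setT) => [|B]; rewrite ?setDv ?cards0 ?addn0 //= subTset eq_sym.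
by apply: sumr_ge0 => y _; apply: p_cm; rewrite ?in_setT ?(nonempty xA, nonempty (in_setT y)).
Qed.

Lemma sum_p_pmarg x A B : x \in A -> B != set0 -> \sum_(y in B) p x y A B = pmarg p x A.
Proof.
move=> xA B0; rewrite (@p_mg A B setT x) ?(nonempty xA, nonempty (in_setT x)) //.
by apply: eq_bigl => y; rewrite in_setT.
Qed.

Lemma pmarg_eq0 x y A B : x \in A -> y \in B -> pmarg p x A = 0 -> p x y A B = 0.
Proof.
move=> xA yB rho0; rewrite -(sum_p_pmarg xA (nonempty yB)) in rho0.
case: p_rjcr => p_ge0 _; apply: (psumr_eq0P _ rho0) => // y' y'B.
by rewrite p_ge0 ?(nonempty xA, nonempty yB).
Qed.

Section Conditional.
Variables (x : X) (A0 : {set X}).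
Hypotheses (xA0 : x \in A0) (rho_gt0 : 0 < pmarg p x A0).

Definition cond_choice y B := p x y A0 B / pmarg p x A0.

Lemma cond_choice_factor A B y : x \in A -> y \in B ->
  p x y A B = pmarg p x A * cond_choice y B.
Proof.
move=> xA yB; have := pmarg_ge0 xA; rewrite le_eqVlt => /orP[/eqP rho0|rhoA_gt0].
  by rewrite -rho0 mul0r pmarg_eq0.
have csi := p_csi (nonempty yB) yB (nonempty xA) (nonempty xA0) xA xA0 rhoA_gt0 rho_gt0.
by rewrite /cond_choice -csi mulrC divfK ?lt0r_neq0.
Qed.

Lemma cond_choice_sum B : B != set0 -> \sum_(y in B) cond_choice y B = 1.
Proof. by move=> B0; rewrite -mulr_suml sum_p_pmarg // divff ?lt0r_neq0. Qed.

(* Choose [A1 ⊇ A0] with a positive Block-Marschak polynomial; then complete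
   monotonicity at [(A1, B)] factors through it. *)
Lemma mobius1_cond_choice_ge0 y B : y \in B -> 0 <= mobius1 (cond_choice y) B.
Proof.
move=> yB; have [A1 A0A1 q_gt0] := exists_mobius1_gt0 rho_gt0.
have xA1 := subsetP A0A1 x xA0.
have := p_cm (nonempty xA1) (nonempty yB) xA1 yB.
rewrite (mobius_mul (f := pmarg p x) (g := cond_choice y)) ?pmulr_rge0 //.
by move=> A' B' A1A' BB'; rewrite cond_choice_factor ?(subsetP A1A') ?(subsetP BB').
Qed.

End Conditional.

Lemma exists_transition x : exists2 g, is_distr g &
  forall A B y, x \in A -> y \in B -> p x y A B = pmarg p x A * choice_prob g y B.
Proof.
case: (pickP [pred A : {set X} | (x \in A) && (0 < pmarg p x A)]).
  move=> A0 /andP[xA0 rho_gt0].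
  have [g g_distr gE] :=
    falmagne (cond_choice_sum xA0 rho_gt0) (mobius1_cond_choice_ge0 xA0 rho_gt0).
  by exists g => // A B y xA yB; rewrite gE // (cond_choice_factor xA0 rho_gt0).
move=> none; have [g g_distr _] := falmagne pmarg_sum mobius1_pmarg_ge0.
exists g => // A B y xA yB.
have rho0 : pmarg p x A = 0.
  apply/eqP; rewrite eq_le pmarg_ge0 // andbT leNgt.
  by have := none A; rewrite /= xA => /negbT.
by rewrite rho0 mul0r pmarg_eq0.
Qed.

End Recovery.
End JointChoice.

Theorem theorem6 (X : finType) (R : realFieldType)
    (p : X -> X -> {set X} -> {set X} -> R) :
  is_rjcr p ->
  (consistent_SICDRU p <->
   [/\ complete_monotonicity p, marginality p & choice_set_independence p]).
Proof.
move=> p_rjcr; split => [[nu [t [[nu_ge0 _] [t_distr p_eq]]]]|[p_cm p_mg p_csi]].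
  have p_mul (A B : {set X}) x y : x \in A -> y \in B ->
      p x y A B = choice_prob nu x A * choice_prob (t x) y B.
    by move=> xA yB; rewrite p_eq ?sum_mul_choice_prob //; apply/set0Pn; [exists x|exists y].
  have tau_sum x (B : {set X}) : B != set0 -> \sum_(y in B) choice_prob (t x) y B = 1.
    exact: choice_prob_sum.
  split.
  - apply: (product_form_complete_monotonicity p_mul) => [x A|x y B].
      exact: mobius1_choice_prob_ge0.
    by apply: mobius1_choice_prob_ge0; case: (t_distr x).
  - exact: product_form_marginality p_mul tau_sum.
  - exact: product_form_choice_set_independence p_mul tau_sum.
have [nu nu_distr nuE] := falmagne (pmarg_sum p_rjcr) (mobius1_pmarg_ge0 p_cm).
have [t t_distr tE] := fin_all_exists2 (exists_transition p_rjcr p_cm p_mg p_csi).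
exists nu, t; split; [|split] => // A B x y _ _ xA yB.
by rewrite sum_mul_choice_prob nuE // tE.
Qed.
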